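(* Let $(G,b,x,k)$ be an instance of Collapsed $k$-Core and let $G'$ be the graph obtained from $G$ by adding a new vertex $u$ adjacent to all vertices of $G$. Then $(G,b,x,k)$ is a yes-instance if and only if $(G',b+1,x,k)$ is a yes-instance.
   Context: For an integer $k$, the $k$-core of a graph $G$ is the (uniquely determined) largest induced subgraph of $G$ in which every vertex has degree at least $k$ (possibly empty); its size is its number of vertices. Collapsed $k$-Core: given an undirected graph $G=(V,E)$ and integers $b$, $x$, $k$, decide whether there is a set $S\subseteq V$ with $|S|\le b$ such that the $k$-core of $G-S$ has at most $x$ vertices. *)

From mathcomp Require Import all_boot.
Set Implicit Arguments. Unset Strict Implicit. Unset Printing Implicit Defensive.

(* A simple undirected graph on a finite vertex type T is a symmetric,
   irreflexive relation e : rel T (hypotheses stated in the theorem). *)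

Definition deg_in (T : finType) (e : rel T) (C : {set T}) (v : T) : nat :=
  #|[set w in C | e v w]|.

Definition min_deg_ge (T : finType) (e : rel T) (k : nat) (C : {set T}) : bool :=
  [forall v in C, k <= deg_in e C v].

(* The k-core of the induced subgraph on D: the largest C subset of D whose
   induced subgraph has minimum degree >= k.  It is the union of all such C
   (the union is itself such a set, hence the unique largest one). *)
Definition kcore (T : finType) (e : rel T) (D : {set T}) (k : nat) : {set T} :=
  \bigcup_(C : {set T} | (C \subset D) && min_deg_ge e k C) C.

Definition collapsed_kcore_yes (T : finType) (e : rel T) (b x k : nat) : Prop :=
  exists S : {set T}, #|S| <= b /\ #|kcore e (~: S) k| <= x.

Definition add_universal (T : finType) (e : rel T) : rel (option T) :=
  fun a c => match a, c with
             | Some a', Some c' => e a' c'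
             | None, Some _ | Some _, None => true
             | None, None => false
             end.

From mathcomp Require Import all_boot.
Set Implicit Arguments. Unset Strict Implicit. Unset Printing Implicit Defensive.

(* Putting the universal vertex u into the deletion set turns G' back into G.
   Conversely, a deletion set S' of G' that avoids u can trade one of its
   vertices w of G for u: the map sending w to u and fixing every other vertex
   embeds G - (S' \ w) into G' - S', because u is adjacent to everything, and
   graph embeddings do not shrink k-cores. *)

Section KCore.
Variables (T : finType) (e : rel T) (k : nat).

Lemma sub_kcore (D C : {set T}) :
  C \subset D -> min_deg_ge e k C -> C \subset kcore e D k.
Proof. by move=> sCD degC; apply: (bigcup_sup C); rewrite sCD degC. Qed.

Lemma kcoreP (D : {set T}) v :
  reflect (exists2 C : {set T}, (C \subset D) && min_deg_ge e k C & v \in C)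
          (v \in kcore e D k).
Proof. exact: (iffP bigcupP) => -[C CD vC]; exists C. Qed.

End KCore.

Section KCoreMorphism.
Variables (T1 T2 : finType) (e1 : rel T1) (e2 : rel T2) (k : nat).
Variable f : T1 -> T2.

Lemma min_deg_ge_imset (C : {set T1}) : injective f ->
  {in C &, forall a b, e1 a b -> e2 (f a) (f b)} ->
  min_deg_ge e1 k C -> min_deg_ge e2 k (f @: C).
Proof.
move=> f_inj f_hom degC; apply/forall_inP=> _ /imsetP[a aC ->].
apply: leq_trans (forall_inP degC a aC) _.
rewrite /deg_in -(card_imset _ f_inj); apply: subset_leq_card.
apply/subsetP=> z /imsetP[b]; rewrite inE => /andP[bC eab] ->.
by rewrite inE imset_f //= f_hom.
Qed.

Lemma leq_card_kcore_embedding (D1 : {set T1}) (D2 : {set T2}) : injective f ->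
  f @: D1 \subset D2 -> {in D1 &, forall a b, e1 a b -> e2 (f a) (f b)} ->
  #|kcore e1 D1 k| <= #|kcore e2 D2 k|.
Proof.
move=> f_inj fD12 f_hom; rewrite -(card_imset _ f_inj); apply: subset_leq_card.
apply/subsetP=> z /imsetP[v /kcoreP[C /andP[sCD1 degC] vC] ->].
have sfCD2 : f @: C \subset D2 := subset_trans (imsetS f sCD1) fD12.
have f_homC : {in C &, forall a b, e1 a b -> e2 (f a) (f b)}.
  by move=> a b aC bC; apply: f_hom; apply: (subsetP sCD1).
apply: (subsetP (sub_kcore sfCD2 (min_deg_ge_imset f_inj f_homC degC))).
exact: imset_f.
Qed.

Lemma min_deg_ge_preimset (C : {set T2}) : C \subset codom f ->
  (forall a b, e2 (f a) (f b) -> e1 a b) ->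
  min_deg_ge e2 k C -> min_deg_ge e1 k (f @^-1: C).
Proof.
move=> sCf f_refl degC; apply/forall_inP=> a; rewrite inE => faC.
apply: leq_trans (forall_inP degC _ faC) _.
rewrite /deg_in; apply: leq_trans (leq_imset_card f _); apply: subset_leq_card.
apply/subsetP=> z; rewrite inE => /andP[zC efaz].
have /codomP[b zE] := subsetP sCf z zC; rewrite zE in zC efaz *.
by rewrite imset_f // !inE zC f_refl.
Qed.

Lemma leq_card_kcore_preimset (D : {set T2}) : D \subset codom f ->
  (forall a b, e2 (f a) (f b) -> e1 a b) ->
  #|kcore e2 D k| <= #|kcore e1 (f @^-1: D) k|.
Proof.
move=> sDf f_refl; apply: leq_trans (leq_imset_card f _); apply: subset_leq_card.
apply/subsetP=> z /kcoreP[C /andP[sCD degC] zC].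
have sCf := subset_trans sCD sDf.
have /codomP[a zE] := subsetP sCf z zC; rewrite zE in zC *.
have sCD' : f @^-1: C \subset f @^-1: D by apply: preimsetS.
apply/imset_f/(subsetP (sub_kcore sCD' (min_deg_ge_preimset sCf f_refl degC))).
by rewrite inE.
Qed.

End KCoreMorphism.

Lemma card_option_set (T : finType) (A : {set option T}) :
  #|A| = (None \in A) + #|Some @^-1: A|.
Proof.
rewrite (cardsD1 None); congr (_ + _).
rewrite -[RHS](card_imset _ (@Some_inj _)); apply: eq_card => -[v|].
  by rewrite !inE (mem_imset _ _ (@Some_inj _)) inE.
by rewrite !inE eqxx; apply/esym/imsetP=> -[].
Qed.

Section UniversalVertex.
Variables (T : finType) (e : rel T) (k : nat).
Hypothesis e_irr : irreflexive e.
Local Notation e' := (add_universal e).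

Lemma leq_card_kcore_delete_universal (S : {set T}) :
  #|kcore e' (~: (None |: Some @: S)) k| <= #|kcore e (~: S) k|.
Proof.
have -> : ~: S = Some @^-1: ~: (None |: Some @: S).
  by apply/setP=> v; rewrite !inE (mem_imset _ _ (@Some_inj _)).
apply: leq_card_kcore_preimset => //; apply/subsetP=> -[v _|].
  by apply/codomP; exists v.
by rewrite !inE eqxx.
Qed.

Lemma leq_card_kcore_Some (S' : {set option T}) :
  #|kcore e (~: (Some @^-1: S')) k| <= #|kcore e' (~: S') k|.
Proof.
apply: leq_card_kcore_embedding.
- exact: Some_inj.
- by apply/subsetP=> z /imsetP[v]; rewrite !inE => vS' ->.
- by [].
Qed.

Lemma leq_card_kcore_swap (S' : {set option T}) (w : T) : None \notin S' ->
  #|kcore e (~: (Some @^-1: S' :\ w)) k| <= #|kcore e' (~: S') k|.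
Proof.
move=> uS'; pose f v := if v == w then None else Some v.
apply: (@leq_card_kcore_embedding _ _ _ _ _ f).
- by move=> a b; rewrite /f; case: eqVneq => [->|_]; case: eqVneq => [->|_] // -[].
- apply/subsetP=> z /imsetP[v]; rewrite !inE negb_and negbK /f => vS' ->.
  by case: eqVneq vS' => //= _; rewrite inE.
- move=> a b _ _; rewrite /f.
  by case: (eqVneq a w) => [->|_]; case: (eqVneq b w) => [->|_] //; rewrite e_irr.
Qed.

End UniversalVertex.

Theorem mainTheorem9 (T : finType) (e : rel T)
  (e_sym : symmetric e) (e_irr : irreflexive e) (b x k : nat) :
  collapsed_kcore_yes e b x k <->
  collapsed_kcore_yes (add_universal e) b.+1 x k.
Proof.
split=> [[S [cardS coreS]] | [S' [cardS' coreS']]].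
  exists (None |: Some @: S); split.
    by rewrite cardsU1 card_imset ?(leq_add (leq_b1 _) cardS) //; exact: Some_inj.
  exact: leq_trans (leq_card_kcore_delete_universal _ _ _) coreS.
rewrite card_option_set in cardS'.
have [uS' | uS'] := boolP (None \in S').
  exists (Some @^-1: S'); split; first by move: cardS'; rewrite uS'.
  exact: leq_trans (leq_card_kcore_Some _ _ _) coreS'.
have [S'0 | [w wS']] := set_0Vmem (Some @^-1: S').
  exists (Some @^-1: S'); split; first by rewrite S'0 cards0.
  exact: leq_trans (leq_card_kcore_Some _ _ _) coreS'.
exists (Some @^-1: S' :\ w); split.
  by rewrite (negbTE uS') (cardsD1 w) wS' in cardS'.
by apply: leq_trans coreS'; exact: leq_card_kcore_swap.
Qed.
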